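(* Let $k$ be a commutative ring and $A$ a $k$-algebra. Let $(\mathcal D\overset{l}{\underset{r}{\leftrightarrows}}\mathcal C,\theta)$ be an $A$-coring twisting datum, where $\mathcal C=(C,\Delta_C,e_C)$ and $\mathcal D=(D,\Delta_D,e_D)$. Suppose that $e_D\circ\theta^{-1}$ is invertible in the convolution algebra ${}_A\mathrm{Hom}_A(C,A)$ and $e_C\circ\theta$ is invertible in the convolution algebra ${}_A\mathrm{Hom}_A(D,A)$. Then the $A$-corings $\mathcal C$ and $\mathcal D$ are isomorphic.
   Context: An $A$-coring $(C,\Delta_C,e_C)$ is an $A$-bimodule $C$ with $A$-bimodule maps $\Delta_C:C\to C\otimes_AC$ (coassociative) and $e_C:C\to A$ (counital). A map of $A$-corings is an $A$-bimodule map compatible with comultiplications and counits. An $A$-coring twisting datum consists of $A$-corings $\mathcal C,\mathcal D$, $A$-coring maps $l:D\to C$ and $r:C\to D$, and an isomorphism of $\mathcal D$-$\mathcal C$-bicomodules $\theta:D^l\to{}^rC$, where $D^l$ is $D$ with left $\mathcal D$-coaction $\Delta_D$ and right $\mathcal C$-coaction $(D\otimes_Al)\Delta_D$, and ${}^rC$ is $C$ with left $\mathcal D$-coaction $(r\otimes_AC)\Delta_C$ and right $\mathcal C$-coaction $\Delta_C$. For an $A$-coring $C$, ${}_A\mathrm{Hom}_A(C,A)$ denotes the $A$-bimodule maps $C\to A$, an algebra under the convolution product $f*g=\mu_A\circ(f\otimes_Ag)\circ\Delta_C$ (with $\mu_A:A\otimes_AA\to A$ the multiplication) and unit $e_C$.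 *)

(* Corings over a k-algebra A, with balanced tensor products
   over A presented as formal sums modulo the (inductively generated)
   tensor-product relations. *)
From HB Require Import structures.
From mathcomp Require Import all_boot all_algebra.
Set Implicit Arguments. Unset Strict Implicit. Unset Printing Implicit Defensive.
Import GRing.Theory.
Local Open Scope ring_scope.

Section Corings.
Variables (k : comPzRingType) (A : algType k).

Record bimod := Bimod {
  bm_car :> zmodType;
  bm_l : A -> bm_car -> bm_car;
  bm_r : bm_car -> A -> bm_car;
  bm_lD : forall a m m', bm_l a (m + m') = bm_l a m + bm_l a m';
  bm_lDa : forall a b m, bm_l (a + b) m = bm_l a m + bm_l b m;
  bm_l1 : forall m, bm_l 1 m = m;
  bm_lM : forall a b m, bm_l (a * b) m = bm_l a (bm_l b m);
  bm_rD : forall a m m', bm_r (m + m') a = bm_r m a + bm_r m' a;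
  bm_rDa : forall a b m, bm_r m (a + b) = bm_r m a + bm_r m b;
  bm_r1 : forall m, bm_r m 1 = m;
  bm_rM : forall a b m, bm_r m (a * b) = bm_r (bm_r m a) b;
  bm_lr : forall a b m, bm_l a (bm_r m b) = bm_r (bm_l a m) b;
  bm_central : forall (x : k) m, bm_l (x%:A) m = bm_r m (x%:A)
}.

Definition bimod_map (M N : bimod) (f : M -> N) : Prop :=
  [/\ forall m m', f (m + m') = f m + f m',
      forall a m, f (bm_l a m) = bm_l a (f m)
    & forall a m, f (bm_r m a) = bm_r (f m) a].

Definition bimod_mapA (M : bimod) (f : M -> A) : Prop :=
  [/\ forall m m', f (m + m') = f m + f m',
      forall a m, f (bm_l a m) = a * f m
    & forall a m, f (bm_r m a) = f m * a].

(* M (x)_A N : elements represented by formal sums (seq of pairs);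
   teq2 is the equivalence "represent the same element of M (x)_A N". *)
Inductive teq2 (M N : bimod) : seq (M * N) -> seq (M * N) -> Prop :=
| teq2_refl s : teq2 s s
| teq2_sym s t : teq2 s t -> teq2 t s
| teq2_trans s t u : teq2 s t -> teq2 t u -> teq2 s u
| teq2_cat s s' t t' : teq2 s t -> teq2 s' t' -> teq2 (s ++ s') (t ++ t')
| teq2_comm s t : teq2 (s ++ t) (t ++ s)
| teq2_addl m m' n : teq2 [:: (m + m', n)] [:: (m, n); (m', n)]
| teq2_addr m n n' : teq2 [:: (m, n + n')] [:: (m, n); (m, n')]
| teq2_zerol n : teq2 [:: (0, n)] [::]
| teq2_zeror m : teq2 [:: (m, 0)] [::]
| teq2_bal m a n : teq2 [:: (bm_r m a, n)] [:: (m, bm_l a n)].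

Inductive teq3 (M N P : bimod) : seq (M * N * P) -> seq (M * N * P) -> Prop :=
| teq3_refl s : teq3 s s
| teq3_sym s t : teq3 s t -> teq3 t s
| teq3_trans s t u : teq3 s t -> teq3 t u -> teq3 s u
| teq3_cat s s' t t' : teq3 s t -> teq3 s' t' -> teq3 (s ++ s') (t ++ t')
| teq3_comm s t : teq3 (s ++ t) (t ++ s)
| teq3_add1 m m' n p : teq3 [:: (m + m', n, p)] [:: (m, n, p); (m', n, p)]
| teq3_add2 m n n' p : teq3 [:: (m, n + n', p)] [:: (m, n, p); (m, n', p)]
| teq3_add3 m n p p' : teq3 [:: (m, n, p + p')] [:: (m, n, p); (m, n, p')]
| teq3_zero1 n p : teq3 [:: (0, n, p)] [::]
| teq3_zero2 m p : teq3 [:: (m, 0, p)] [::]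
| teq3_zero3 m n : teq3 [:: (m, n, 0)] [::]
| teq3_bal12 m a n p : teq3 [:: (bm_r m a, n, p)] [:: (m, bm_l a n, p)]
| teq3_bal23 m n a p : teq3 [:: (m, bm_r n a, p)] [:: (m, n, bm_l a p)].

Definition tl (M N : bimod) (a : A) (s : seq (M * N)) : seq (M * N) :=
  map (fun p => (bm_l a p.1, p.2)) s.
Definition tr (M N : bimod) (s : seq (M * N)) (a : A) : seq (M * N) :=
  map (fun p => (p.1, bm_r p.2 a)) s.

Definition tmap2 (M N M' N' : bimod) (f : M -> M') (g : N -> N')
  (s : seq (M * N)) : seq (M' * N') := map (fun p => (f p.1, g p.2)) s.

(* (Delta (x) C) and (C (x) Delta) applied to an element of C (x)_A C *)
Definition delta_l (C : bimod) (delta : C -> seq (C * C)) (s : seq (C * C))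
  : seq (C * C * C) :=
  flatten (map (fun p => map (fun q => (q.1, q.2, p.2)) (delta p.1)) s).
Definition delta_r (C : bimod) (delta : C -> seq (C * C)) (s : seq (C * C))
  : seq (C * C * C) :=
  flatten (map (fun p => map (fun q => (p.1, q.1, q.2)) (delta p.2)) s).

Definition is_coring (C : bimod) (delta : C -> seq (C * C)) (eps : C -> A)
  : Prop :=
  (forall x y, teq2 (delta (x + y)) (delta x ++ delta y)) /\
  (forall a x, teq2 (delta (bm_l a x)) (tl a (delta x))) /\
  (forall a x, teq2 (delta (bm_r x a)) (tr (delta x) a)) /\
  (forall c, teq3 (delta_l delta (delta c)) (delta_r delta (delta c))) /\
  bimod_mapA eps /\
  (forall c, \sum_(p <- delta c) bm_l (eps p.1) p.2 = c) /\
  (forall c, \sum_(p <- delta c) bm_r p.1 (eps p.2) = c).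

Record coring := Coring {
  co_car :> bimod;
  co_delta : co_car -> seq (co_car * co_car);
  co_eps : co_car -> A;
  co_ax : is_coring co_delta co_eps
}.

Definition coring_map (C D : coring) (f : C -> D) : Prop :=
  [/\ bimod_map f,
      forall c, teq2 (@co_delta D (f c)) (tmap2 f f (@co_delta C c))
    & forall c, @co_eps D (f c) = @co_eps C c].

Definition coring_iso (C D : coring) : Prop :=
  exists (f : C -> D) (g : D -> C),
    [/\ coring_map f, coring_map g, cancel f g & cancel g f].

Definition conv (C : coring) (f g : C -> A) (c : C) : A :=
  \sum_(p <- @co_delta C c) f p.1 * g p.2.

Definition conv_invertible (C : coring) (f : C -> A) : Prop :=
  exists g : C -> A, [/\ bimod_mapA g,
    forall c, conv f g c = @co_eps C c & forall c, conv g f c = @co_eps C c].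

Definition twisting_datum (C D : coring) (l : D -> C) (r : C -> D)
  (theta : D -> C) (thetainv : C -> D) : Prop :=
  coring_map l /\ coring_map r /\
  bimod_map theta /\ cancel theta thetainv /\ cancel thetainv theta /\
  (forall d, teq2 (tmap2 id theta (@co_delta D d))
                  (tmap2 r id (@co_delta C (theta d)))) /\
  (forall d, teq2 (tmap2 theta id (tmap2 id l (@co_delta D d)))
                  (@co_delta C (theta d))).

End Corings.

(** The right convolution action [rconv f d = d_(1) . f(d_(2))] of the
    convolution algebra on a coring turns convolution products into
    composition, so [rconv] of a convolution-invertible [f] is bijective.
    Left colinearity of [theta] and the counit law for [C] give
    [r \o theta = rconv (e_C \o theta)]; hence the coring map [r] is a
    bijection, with inverse [theta \o rconv psi] for [psi] the convolution
    inverse of [e_C \o theta], and the inverse of a bijective coring map is a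
    coring map. *)
From HB Require Import structures.
From mathcomp Require Import all_boot all_algebra.
Set Implicit Arguments. Unset Strict Implicit. Unset Printing Implicit Defensive.
Import GRing.Theory.
Local Open Scope ring_scope.

Section Corings.
Variables (k : comPzRingType) (A : algType k).

Lemma teq2_sum (M N : bimod A) (V : zmodType) (F : M -> N -> V) :
    (forall m m' n, F (m + m') n = F m n + F m' n) ->
    (forall m n n', F m (n + n') = F m n + F m n') ->
    (forall m a n, F (bm_r m a) n = F m (bm_l a n)) ->
  forall s t, teq2 s t -> \sum_(p <- s) F p.1 p.2 = \sum_(p <- t) F p.1 p.2.
Proof.
move=> FDl FDr Fbal s t; elim=> {s t} //.
- by move=> s t u _ -> _ ->.
- by move=> s s' t t' _ IHs _ IHs'; rewrite !big_cat IHs IHs'.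
- by move=> s t; rewrite !big_cat; apply: addrC.
- by move=> m m' n; rewrite !big_cons big_nil /= FDl !addr0.
- by move=> m n n'; rewrite !big_cons big_nil /= FDr !addr0.
- move=> n; rewrite big_cons !big_nil /= addr0.
  by apply: (addrI (F 0 n)); rewrite -FDl !addr0.
- move=> m; rewrite big_cons !big_nil /= addr0.
  by apply: (addrI (F m 0)); rewrite -FDr !addr0.
- by move=> m a n; rewrite !big_cons !big_nil /= Fbal.
Qed.

Lemma teq3_sum (M N P : bimod A) (V : zmodType) (F : M -> N -> P -> V) :
    (forall m m' n p, F (m + m') n p = F m n p + F m' n p) ->
    (forall m n n' p, F m (n + n') p = F m n p + F m n' p) ->
    (forall m n p p', F m n (p + p') = F m n p + F m n p') ->
    (forall m a n p, F (bm_r m a) n p = F m (bm_l a n) p) ->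
    (forall m n a p, F m (bm_r n a) p = F m n (bm_l a p)) ->
  forall s t, teq3 s t ->
    \sum_(q <- s) F q.1.1 q.1.2 q.2 = \sum_(q <- t) F q.1.1 q.1.2 q.2.
Proof.
move=> FD1 FD2 FD3 Fbal12 Fbal23 s t; elim=> {s t} //.
- by move=> s t u _ -> _ ->.
- by move=> s s' t t' _ IHs _ IHs'; rewrite !big_cat IHs IHs'.
- by move=> s t; rewrite !big_cat; apply: addrC.
- by move=> *; rewrite !big_cons big_nil /= FD1 !addr0.
- by move=> *; rewrite !big_cons big_nil /= FD2 !addr0.
- by move=> *; rewrite !big_cons big_nil /= FD3 !addr0.
- move=> n p; rewrite big_cons !big_nil /= addr0.
  by apply: (addrI (F 0 n p)); rewrite -FD1 !addr0.
- move=> m p; rewrite big_cons !big_nil /= addr0.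
  by apply: (addrI (F m 0 p)); rewrite -FD2 !addr0.
- move=> m n; rewrite big_cons !big_nil /= addr0.
  by apply: (addrI (F m n 0)); rewrite -FD3 !addr0.
- by move=> *; rewrite !big_cons !big_nil /= Fbal12.
- by move=> *; rewrite !big_cons !big_nil /= Fbal23.
Qed.

Lemma bm_r0 (M : bimod A) (m : M) : bm_r m 0 = 0.
Proof. by apply: (addrI (bm_r m 0)); rewrite -bm_rDa !addr0. Qed.

Lemma bm_r_sumr (M : bimod A) (m : M) (I : Type) (s : seq I) (h : I -> A) :
  bm_r m (\sum_(i <- s) h i) = \sum_(i <- s) bm_r m (h i).
Proof.
elim: s => [|x s IHs]; first by rewrite !big_nil bm_r0.
by rewrite !big_cons bm_rDa IHs.
Qed.

Lemma bimod_map0 (M N : bimod A) (f : M -> N) : bimod_map f -> f 0 = 0.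
Proof. by case=> fD _ _; apply: (addrI (f 0)); rewrite -fD !addr0. Qed.

Lemma bimod_map_sum (M N : bimod A) (f : M -> N) (I : Type) (s : seq I)
    (h : I -> M) :
  bimod_map f -> f (\sum_(i <- s) h i) = \sum_(i <- s) f (h i).
Proof.
move=> fmap; have f0 := bimod_map0 fmap; case: fmap => fD _ _.
elim: s => [|x s IHs]; first by rewrite !big_nil f0.
by rewrite !big_cons fD IHs.
Qed.

Lemma bimod_mapA_comp (M N : bimod A) (f : M -> N) (g : N -> A) :
  bimod_map f -> bimod_mapA g -> bimod_mapA (g \o f).
Proof. by case=> fD fl fr [gD gl gr]; split=> * /=; rewrite ?fD ?fl ?fr. Qed.

Lemma bimod_map_inv (M N : bimod A) (f : M -> N) (g : N -> M) :
  bimod_map f -> cancel f g -> cancel g f -> bimod_map g.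
Proof.
case=> fD fl fr fK gK; split=> *; apply: (can_inj fK).
- by rewrite fD !gK.
- by rewrite fl !gK.
- by rewrite fr !gK.
Qed.

Lemma teq2_tmap2 (M N M' N' : bimod A) (f : M -> M') (g : N -> N') :
    bimod_map f -> bimod_map g ->
  forall s t, teq2 s t -> teq2 (tmap2 f g s) (tmap2 f g t).
Proof.
move=> fmap gmap; have f0 := bimod_map0 fmap; have g0 := bimod_map0 gmap.
case: fmap => fD fl fr; case: gmap => gD gl gr.
move=> s t; elim=> {s t}.
- by move=> s; apply: teq2_refl.
- by move=> s t _; apply: teq2_sym.
- by move=> s t u _ st _; apply: teq2_trans.
- by move=> s s' t t' _ ? _ ?; rewrite /tmap2 !map_cat; apply: teq2_cat.
- by move=> s t; rewrite /tmap2 !map_cat; apply: teq2_comm.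
- by move=> m m' n; rewrite /tmap2 /= fD; apply: teq2_addl.
- by move=> m n n'; rewrite /tmap2 /= gD; apply: teq2_addr.
- by move=> n; rewrite /tmap2 /= f0; apply: teq2_zerol.
- by move=> m; rewrite /tmap2 /= g0; apply: teq2_zeror.
- by move=> m a n; rewrite /tmap2 /= fr gl; apply: teq2_bal.
Qed.

Lemma teq2_sum_bm_r (M N : bimod A) (f : N -> A) : bimod_mapA f ->
  forall s t : seq (M * N), teq2 s t ->
    \sum_(p <- s) bm_r p.1 (f p.2) = \sum_(p <- t) bm_r p.1 (f p.2).
Proof.
case=> fD fl _; apply: (teq2_sum (F := fun m n => bm_r m (f n))) => *.
- by rewrite bm_rD.
- by rewrite fD bm_rDa.
- by rewrite fl bm_rM.
Qed.

Section CoringAxioms.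
Variable C : coring A.

Lemma co_deltaD (x y : C) : teq2 (co_delta (x + y)) (co_delta x ++ co_delta y).
Proof. by case: (co_ax C). Qed.

Lemma co_delta_bm_r (x : C) (a : A) :
  teq2 (co_delta (bm_r x a)) (tr (co_delta x) a).
Proof. by case: (co_ax C) => _ [_ []]. Qed.

Lemma co_coassoc (c : C) :
  teq3 (delta_l (@co_delta _ _ C) (co_delta c))
       (delta_r (@co_delta _ _ C) (co_delta c)).
Proof. by case: (co_ax C) => _ [_ [_ []]]. Qed.

Lemma co_coassoc_sum (V : zmodType) (F : C -> C -> C -> V) :
    (forall m m' n p, F (m + m') n p = F m n p + F m' n p) ->
    (forall m n n' p, F m (n + n') p = F m n p + F m n' p) ->
    (forall m n p p', F m n (p + p') = F m n p + F m n p') ->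
    (forall m a n p, F (bm_r m a) n p = F m (bm_l a n) p) ->
    (forall m n a p, F m (bm_r n a) p = F m n (bm_l a p)) ->
  forall c, \sum_(p <- co_delta c) \sum_(q <- co_delta p.1) F q.1 q.2 p.2
          = \sum_(p <- co_delta c) \sum_(q <- co_delta p.2) F p.1 q.1 q.2.
Proof.
move=> FD1 FD2 FD3 Fbal12 Fbal23 c.
transitivity (\sum_(q <- delta_l (@co_delta _ _ C) (co_delta c)) F q.1.1 q.1.2 q.2).
  by rewrite big_flatten big_map; apply: eq_bigr => p _; rewrite big_map.
rewrite (teq3_sum FD1 FD2 FD3 Fbal12 Fbal23 (co_coassoc c)) big_flatten big_map.
by apply: eq_bigr => p _; rewrite big_map.
Qed.

Lemma co_eps_bimod_mapA : bimod_mapA (@co_eps _ _ C).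
Proof. by case: (co_ax C) => _ [_ [_ [_ []]]]. Qed.

Lemma co_counit_r (c : C) : \sum_(p <- co_delta c) bm_r p.1 (co_eps p.2) = c.
Proof. by case: (co_ax C) => _ [_ [_ [_ [_ [_ ]]]]]. Qed.

End CoringAxioms.

Lemma coring_map_inv (C D : coring A) (f : C -> D) (g : D -> C) :
  coring_map f -> cancel f g -> cancel g f -> coring_map g.
Proof.
case=> fmap fdelta feps fK gK; have gmap := bimod_map_inv fmap fK gK.
split=> // [d|d]; last by rewrite -feps gK.
have := teq2_tmap2 gmap gmap (fdelta (g d)); rewrite gK => /teq2_sym.
rewrite /tmap2 -map_comp (eq_map (g := id)) ?map_id // => -[x y] /=.
by rewrite !fK.
Qed.

Definition rconv (D : coring A) (f : D -> A) (d : D) : D :=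
  \sum_(p <- co_delta d) bm_r p.1 (f p.2).

Section RightConvolution.
Variables (D : coring A) (f : D -> A).
Hypothesis fmap : bimod_mapA f.

Lemma rconvD (x y : D) : rconv f (x + y) = rconv f x + rconv f y.
Proof. by rewrite /rconv (teq2_sum_bm_r fmap (co_deltaD x y)) big_cat. Qed.

Lemma rconv_sum (I : Type) (s : seq I) (h : I -> D) :
  rconv f (\sum_(i <- s) h i) = \sum_(i <- s) rconv f (h i).
Proof.
have rconv0 : rconv f 0 = 0.
  by apply: (addrI (rconv f 0)); rewrite -rconvD !addr0.
elim: s => [|x s IHs]; first by rewrite !big_nil rconv0.
by rewrite !big_cons rconvD IHs.
Qed.

Lemma rconv_bm_r (x : D) (a : A) :
  rconv f (bm_r x a) = \sum_(q <- co_delta x) bm_r q.1 (f q.2 * a).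
Proof.
rewrite /rconv (teq2_sum_bm_r fmap (co_delta_bm_r x a)) /tr big_map.
by apply: eq_bigr => q _; case: fmap => _ _ ->.
Qed.

End RightConvolution.

Lemma rconv_comp (D : coring A) (f g : D -> A) :
    bimod_mapA f -> bimod_mapA g ->
  forall d, rconv g (rconv f d) = rconv (conv g f) d.
Proof.
move=> [fD fl _] [gD gl gr] d; rewrite {2}/rconv rconv_sum //.
under eq_bigr => p _ do rewrite rconv_bm_r //.
rewrite (co_coassoc_sum (F := fun x y z => bm_r x (g y * f z))).
- by apply: eq_bigr => p _; rewrite /conv bm_r_sumr.
- by move=> *; rewrite bm_rD.
- by move=> *; rewrite gD mulrDl bm_rDa.
- by move=> *; rewrite fD mulrDr bm_rDa.
- by move=> *; rewrite gl -bm_rM mulrA.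
- by move=> *; rewrite gr fl mulrA.
Qed.

Lemma rconvK (D : coring A) (f g : D -> A) :
    bimod_mapA f -> bimod_mapA g ->
  conv g f =1 @co_eps _ _ D -> cancel (rconv f) (rconv g).
Proof.
move=> fmap gmap gf_eps d; rewrite rconv_comp // -[RHS]co_counit_r.
by apply: eq_bigr => p _; rewrite gf_eps.
Qed.

Lemma r_theta_rconv (C D : coring A) (r : C -> D) (theta : D -> C) :
    coring_map r -> bimod_map theta ->
    (forall d, teq2 (tmap2 id theta (co_delta d))
                    (tmap2 r id (co_delta (theta d)))) ->
  forall d, r (theta d) = rconv (fun d => co_eps (theta d)) d.
Proof.
case=> rmap _ _ thetamap colin d; have [_ _ r_bm_r] := rmap.
have := teq2_sum_bm_r (co_eps_bimod_mapA C) (colin d).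
rewrite /tmap2 !big_map /= /rconv => ->.
rewrite -{1}(co_counit_r (theta d)) bimod_map_sum //.
by apply: eq_bigr => q _; rewrite r_bm_r.
Qed.

End Corings.

Theorem lemma5p1 (k : comPzRingType) (A : algType k) (C D : coring A)
  (l : D -> C) (r : C -> D) (theta : D -> C) (thetainv : C -> D) :
  twisting_datum l r theta thetainv ->
  conv_invertible (fun c : C => @co_eps _ _ D (thetainv c)) ->
  conv_invertible (fun d : D => @co_eps _ _ C (theta d)) ->
  coring_iso C D.
Proof.
move=> [_ [rmap [thetamap [_ [thetainvK [colin _]]]]]] _ [psi [psimap phipsi psiphi]].
set phi := fun d : D => co_eps (theta d).
have phimap : bimod_mapA phi := bimod_mapA_comp thetamap (co_eps_bimod_mapA C).
have r_theta := r_theta_rconv rmap thetamap colin.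
pose g d := theta (rconv psi d).
have gK : cancel g r by move=> d; rewrite /g r_theta (rconvK psimap phimap).
have rK : cancel r g.
  by move=> c; rewrite /g -{1}(thetainvK c) r_theta (rconvK phimap psimap).
by exists r, g; split=> //; apply: coring_map_inv rK gK.
Qed.
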